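(* Let $\Omega$ be a semigroup and $(\mathcal{A},\{\eta^1,\eta^2,\dots\})$ a $Dend_\infty$-family algebra relative to $\Omega$. Then $(\mathcal{A},\{\mu^1,\mu^2,\dots\})$ is an $A_\infty$-algebra relative to $\Omega$, where $\mu^k:=\eta^{k,[1]}+\cdots+\eta^{k,[k]}$ (i.e. $\mu^k_{\alpha_1,\dots,\alpha_k}=\sum_{r=1}^k\eta^{k,[r]}_{\alpha_1,\dots,\alpha_k}$) for all $k\ge1$.
   Context: $\mathbf{k}$ is a commutative unital ring of characteristic $0$; $\Omega$ a semigroup; $\mathcal{A}=\oplus_{i\in\mathbb{Z}}\mathcal{A}^i$ a graded $\mathbf{k}$-module. $C_k=\{[1],\dots,[k]\}$ formal symbols. For $m,n\ge1$, $1\le i\le m$, $1\le r\le m+n-1$: $R_0[r]$ is $[r]$ if $r\le i-1$, $[i]$ if $i\le r\le i+n-1$, $[r-n+1]$ if $r\ge i+n$; $R_i[r]$ is $[r-i+1]$ if $i\le r\le i+n-1$ and the formal sum $[1]+\cdots+[n]$ otherwise; $\eta^{n,[1]+\cdots+[n]}:=\sum_{s}\eta^{n,[s]}$. Sign $\pm:=(-1)^{i(n+1)+n(|a_1|+\cdots+|a_{i-1}|)}$. A $Dend_\infty$-family algebra: for each $k\ge1$, a $k$-tuple $\eta^k=(\eta^{k,[1]},\dots,\eta^{k,[k]})$, each $\eta^{k,[r]}=\{\eta^{k,[r]}_{\alpha_1,\dots,\alpha_k}:\mathcal{A}^{\otimes k}\to\mathcal{A}\}_{\alpha_j\in\Omega}$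 multilinear of degree $k-2$, with $\eta^{k,[r]}_{\alpha_1,\dots,\alpha_k}$ independent of $\alpha_r$, satisfying for all $N\ge1$, $[r]\in C_N$: $\sum_{m+n=N+1}\sum_{i=1}^m\pm\,\eta^{m,R_0[r]}_{\alpha_1,\dots,\alpha_i\cdots\alpha_{i+n-1},\dots,\alpha_N}\big(a_1,\dots,a_{i-1},\eta^{n,R_i[r]}_{\alpha_i,\dots,\alpha_{i+n-1}}(a_i,\dots,a_{i+n-1}),a_{i+n},\dots,a_N\big)=0$. An $A_\infty$-algebra relative to $\Omega$: collections $\mu^k=\{\mu^k_{\alpha_1,\dots,\alpha_k}:\mathcal{A}^{\otimes k}\to\mathcal{A}\}_{\alpha_j\in\Omega}$ of multilinear maps of degree $k-2$, $k\ge1$, with $\sum_{m+n=N+1}\sum_{i=1}^m\pm\,\mu^m_{\alpha_1,\dots,\alpha_i\cdots\alpha_{i+n-1},\dots,\alpha_N}\big(a_1,\dots,a_{i-1},\mu^n_{\alpha_i,\dots,\alpha_{i+n-1}}(a_i,\dots,a_{i+n-1}),a_{i+n},\dots,a_N\big)=0$ for all $N\ge1$, homogeneous $a_j$ and $\alpha_j\in\Omega$ (in the outer label the block $\alpha_i,\dots,\alpha_{i+n-1}$ is replaced by its product). *)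

From HB Require Import structures.
From mathcomp Require Import all_boot all_order all_algebra.
Set Implicit Arguments. Unset Strict Implicit. Unset Printing Implicit Defensive.
Import Order.TTheory GRing.Theory Num.Theory.
Local Open Scope ring_scope.

(* Conventions:
   - a k-multilinear map (collection over Omega) is modelled as
     [f : seq Om -> seq A -> A], used on label/argument lists of length k;
   - indices r, i are 1-based as in the paper;
   - the grading of A is a family [G : int -> pred A] of submodules
     giving a direct-sum decomposition A = (+)_i G i. *)

Section Defs.
Variables (K : comNzRingType) (A : lmodType K).

Definition char0 : Prop := forall n : nat, (n%:R : K) = 0 -> n = 0%N.

Definition graded (G : int -> pred A) : Prop :=
  [/\ (forall i, 0 \in G i /\
         forall (c : K) (u v : A), u \in G i -> v \in G i -> c *: u + v \in G i),
      (forall a : A, exists (s : seq int) (f : int -> A),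
           [/\ uniq s, (forall i, f i \in G i) & a = \sum_(i <- s) f i]) &
      (forall (s : seq int) (f : int -> A), uniq s -> (forall i, f i \in G i) ->
           \sum_(i <- s) f i = 0 -> forall i, i \in s -> f i = 0)].

Definition homog_args (G : int -> pred A) (N : nat) (xs : seq A) (ds : seq int) :=
  [/\ size xs = N, size ds = N &
      forall j, (j < N)%N -> nth 0 xs j \in G (nth 0 ds j)].

Variable Om : Type.

Definition multilinear (k : nat) (f : seq Om -> seq A -> A) : Prop :=
  forall (al : seq Om) (l r : seq A) (c : K) (x y : A),
    size al = k -> (size l + size r + 1)%N = k ->
    f al (l ++ (c *: x + y) :: r) = c *: f al (l ++ x :: r) + f al (l ++ y :: r).

Definition has_degree (G : int -> pred A) (k : nat) (e : int)
    (f : seq Om -> seq A -> A) : Prop :=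
  forall (al : seq Om) (xs : seq A) (ds : seq int),
    size al = k -> homog_args G k xs ds -> f al xs \in G (\sum_(d <- ds) d + e).

(* the label list alpha_1..alpha_N with the block of length n starting at
   position j+1 (0-based j) replaced by its semigroup product *)
Definition contract (op : Om -> Om -> Om) (al : seq Om) (j n : nat) : seq Om :=
  take j al ++ match drop j al with
               | x :: rest => foldl op x (take n.-1 rest) :: drop n.-1 rest
               | [::] => [::]
               end.

(* the argument list a_1..a_{i-1}, b, a_{i+n}..a_N   (j = i-1) *)
Definition insert_block (xs : seq A) (j n : nat) (b : A) : seq A :=
  take j xs ++ b :: drop (j + n) xs.

Definition ainf_sign (i n : nat) (ds : seq int) : K :=
  (-1) ^+ absz ((i * (n + 1))%:Z + n%:Z * \sum_(d <- take i.-1 ds) d).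

Definition ainf_identity (G : int -> pred A) (op : Om -> Om -> Om)
    (mu : nat -> seq Om -> seq A -> A) : Prop :=
  forall (N : nat) (al : seq Om) (xs : seq A) (ds : seq int),
    (1 <= N)%N -> size al = N -> homog_args G N xs ds ->
    \sum_(1 <= m < N.+1) \sum_(1 <= i < m.+1)
      ainf_sign i (N.+1 - m)%N ds *:
        mu m (contract op al i.-1 (N.+1 - m)%N)
           (insert_block xs i.-1 (N.+1 - m)%N
              (mu (N.+1 - m)%N (take (N.+1 - m)%N (drop i.-1 al))
                             (take (N.+1 - m)%N (drop i.-1 xs)))) = 0.

Definition is_Ainf_algebra (G : int -> pred A) (op : Om -> Om -> Om)
    (mu : nat -> seq Om -> seq A -> A) : Prop :=
  [/\ forall k, (1 <= k)%N -> multilinear k (mu k),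
      forall k, (1 <= k)%N -> has_degree G k (k%:Z - 2) (mu k) &
      ainf_identity G op mu].

Definition R0 (i n r : nat) : nat :=
  if (r < i)%N then r else if (r <= i + n - 1)%N then i else (r - n + 1)%N.

Definition eta_Ri (eta : nat -> nat -> seq Om -> seq A -> A) (n i r : nat)
    (bl : seq Om) (ys : seq A) : A :=
  if (i <= r <= i + n - 1)%N then eta n (r - i + 1)%N bl ys
  else \sum_(1 <= s < n.+1) eta n s bl ys.

Definition dend_identity (G : int -> pred A) (op : Om -> Om -> Om)
    (eta : nat -> nat -> seq Om -> seq A -> A) : Prop :=
  forall (N r : nat) (al : seq Om) (xs : seq A) (ds : seq int),
    (1 <= r <= N)%N -> size al = N -> homog_args G N xs ds ->
    \sum_(1 <= m < N.+1) \sum_(1 <= i < m.+1)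
      ainf_sign i (N.+1 - m)%N ds *:
        eta m (R0 i (N.+1 - m)%N r) (contract op al i.-1 (N.+1 - m)%N)
           (insert_block xs i.-1 (N.+1 - m)%N
              (eta_Ri eta (N.+1 - m)%N i r (take (N.+1 - m)%N (drop i.-1 al))
                                        (take (N.+1 - m)%N (drop i.-1 xs)))) = 0.

Definition indep_label (k r : nat) (f : seq Om -> seq A -> A) : Prop :=
  forall (l rt : seq Om) (x y : Om) (xs : seq A),
    size l = r.-1 -> (size l + size rt + 1)%N = k ->
    f (l ++ x :: rt) xs = f (l ++ y :: rt) xs.

Definition is_Dend_family_algebra (G : int -> pred A) (op : Om -> Om -> Om)
    (eta : nat -> nat -> seq Om -> seq A -> A) : Prop :=
  [/\ forall k r, (1 <= r <= k)%N -> multilinear k (eta k r),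
      forall k r, (1 <= r <= k)%N -> has_degree G k (k%:Z - 2) (eta k r),
      forall k r, (1 <= r <= k)%N -> indep_label k r (eta k r) &
      dend_identity G op eta].

Definition mu_of_eta (eta : nat -> nat -> seq Om -> seq A -> A) (k : nat)
    (al : seq Om) (xs : seq A) : A :=
  \sum_(1 <= r < k.+1) eta k r al xs.

End Defs.

From HB Require Import structures.
From mathcomp Require Import all_boot all_order all_algebra.
From mathcomp Require Import zify.
Import Order.TTheory GRing.Theory Num.Theory.
Local Open Scope ring_scope.

(* Summing the Dend identity for [r] over all [r = 1..N] gives the A_oo
   identity for [mu = sum_r eta^[r]].  Fix a summand [(m, i)] with inner arity
   [n].  As [r] runs over [1..m+n-1], the outer index [R_0[r]] runs over
   [1..i-1], stays at [i] while [r] crosses the block [i..i+n-1], and then runs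
   over [i+1..m].  Inside the block the inner maps [eta^{n,[r-i+1]}] add up to
   [mu^n] by linearity in the i-th slot, and outside it the inner map already is
   [mu^n]; so the summand becomes [sum_{r'} eta^{m,[r']}(.., mu^n(..), ..)],
   i.e. the A_oo summand [mu^m(.., mu^n(..), ..)]. *)

Lemma R0_lt (i n r : nat) : (r < i)%N -> R0 i n r = r.
Proof. by rewrite /R0 => ->. Qed.

Lemma R0_block (i n r : nat) : (i <= r <= i + n - 1)%N -> R0 i n r = i.
Proof. by rewrite /R0 => /andP[ir ->]; rewrite ltnNge ir. Qed.

Lemma R0_gt (i n r : nat) : (1 <= n)%N -> (i + n <= r)%N -> R0 i n r = (r - n + 1)%N.
Proof. by move=> n1 inr; rewrite /R0 !ifN //; lia. Qed.

Lemma sum_R0_reindex (V W : nmodType) (m n i : nat)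
    (F : nat -> V -> W) (g : nat -> V) :
  (1 <= i <= m)%N -> (1 <= n)%N ->
  F i 0 = 0 -> {morph F i : b c / b + c} ->
  \sum_(1 <= r < (m + n - 1).+1) F (R0 i n r)
     (if (i <= r <= i + n - 1)%N then g (r - i + 1)%N else \sum_(1 <= s < n.+1) g s)
  = \sum_(1 <= r < m.+1) F r (\sum_(1 <= s < n.+1) g s).
Proof.
move=> /andP[i1 im] n1 F0 FD.
rewrite (@big_cat_nat _ _ _ i) //=; last by lia.
rewrite [X in _ + X = _](@big_cat_nat _ _ _ (i + n)%N) //=; try lia.
rewrite [RHS](@big_cat_nat _ _ _ i) //=; last by lia.
rewrite [X in _ = _ + X](@big_cat_nat _ _ _ i.+1) //= big_nat1.
congr (_ + (_ + _)).
- by apply: eq_big_nat => r /andP[_ ri]; rewrite R0_lt // ifN //; lia.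
- rewrite (big_morph (F i) FD F0) -(add0n i) big_addn [RHS]big_add1 /=.
  have -> : (i + n - i = n.+1.-1)%N by lia.
  apply: eq_big_nat => k /andP[_ kn].
  by rewrite R0_block ?ifT; [congr (F i (g _)) | |]; lia.
- rewrite -(add0n (i + n)%N) big_addn -(add0n i.+1) big_addn.
  have -> : ((m + n - 1).+1 - (i + n) = m.+1 - i.+1)%N by lia.
  apply: eq_big_nat => k _.
  by rewrite R0_gt ?ifN; [congr F | | |]; lia.
Qed.

Lemma size_contract (Om : Type) (op : Om -> Om -> Om) (al : seq Om) (j n : nat) :
  (1 <= n)%N -> (j + n <= size al)%N ->
  size (contract op al j n) = (size al - n + 1)%N.
Proof.
move=> n1 jn; rewrite /contract size_cat size_takel; last by lia.
have := size_drop j al.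
by case: (drop j al) => [|x rest] /= hs; rewrite ?size_drop; lia.
Qed.

Section MuOfEta.
Variables (K : comNzRingType) (A : lmodType K) (Om : Type).

Lemma multilinear_slotD (k : nat) (f : seq Om -> seq A -> A)
    (al : seq Om) (l r : seq A) (x y : A) :
  multilinear k f -> size al = k -> (size l + size r + 1)%N = k ->
  f al (l ++ (x + y) :: r) = f al (l ++ x :: r) + f al (l ++ y :: r).
Proof. by move=> fml sal slr; rewrite -[x]scale1r fml // !scale1r. Qed.

Lemma multilinear_slot0 (k : nat) (f : seq Om -> seq A -> A)
    (al : seq Om) (l r : seq A) :
  multilinear k f -> size al = k -> (size l + size r + 1)%N = k ->
  f al (l ++ 0 :: r) = 0.
Proof.
move=> fml sal slr; have := fml al l r (-1) 0 0 sal slr.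
by rewrite !scaleN1r oppr0 add0r addNr.
Qed.

Variable eta : nat -> nat -> seq Om -> seq A -> A.

Lemma multilinear_mu_of_eta (k : nat) :
  (forall r, (1 <= r <= k)%N -> multilinear k (eta k r)) ->
  multilinear k (mu_of_eta eta k).
Proof.
move=> ml al l r c x y sal slr; rewrite /mu_of_eta scaler_sumr -big_split.
by apply: eq_big_nat => s /andP[s1 sk]; apply: ml; rewrite // s1.
Qed.

Lemma has_degree_mu_of_eta (G : int -> pred A) (k : nat) (e : int) :
  graded G -> (forall r, (1 <= r <= k)%N -> has_degree G k e (eta k r)) ->
  has_degree G k e (mu_of_eta eta k).
Proof.
move=> [Gsub _ _] dg al xs ds sal hx; rewrite /mu_of_eta big_nat_cond.
have [G0 GD] := Gsub (\sum_(d <- ds) d + e).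
apply: (big_ind (fun z => z \in G _)) => // [u v Gu Gv|s /andP[s1 _]].
  by rewrite -[u]scale1r GD.
exact: dg.
Qed.

Lemma sum_dend_summand (m n i : nat) (C : seq Om) (xs : seq A)
    (bl : seq Om) (ys : seq A) :
  (1 <= i <= m)%N -> (1 <= n)%N -> size C = m -> size xs = (m + n - 1)%N ->
  multilinear m (eta m i) ->
  \sum_(1 <= r < (m + n - 1).+1)
    eta m (R0 i n r) C (insert_block xs i.-1 n (eta_Ri eta n i r bl ys))
  = mu_of_eta eta m C (insert_block xs i.-1 n (mu_of_eta eta n bl ys)).
Proof.
move=> im n1 sC sxs ml.
have slot_sizes : (size (take i.-1 xs) + size (drop (i.-1 + n) xs) + 1)%N = m.
  by rewrite size_takel ?size_drop; lia.
rewrite /eta_Ri /mu_of_eta.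
apply: (@sum_R0_reindex _ _ m n i
         (fun r b => eta m r C (insert_block xs i.-1 n b)) (fun s => eta n s bl ys))
  => // [|b c].
  exact: multilinear_slot0 ml sC slot_sizes.
exact: multilinear_slotD ml sC slot_sizes.
Qed.

Lemma ainf_identity_mu_of_eta (G : int -> pred A) (op : Om -> Om -> Om) :
  (forall k r, (1 <= r <= k)%N -> multilinear k (eta k r)) ->
  dend_identity G op eta -> ainf_identity G op (mu_of_eta eta).
Proof.
move=> ml di N al xs ds N1 sal hx.
have sxs : size xs = N by case: hx.
transitivity (\sum_(1 <= m < N.+1) \sum_(1 <= i < m.+1) \sum_(1 <= r < N.+1)
      ainf_sign K i (N.+1 - m)%N ds *:
        eta m (R0 i (N.+1 - m)%N r) (contract op al i.-1 (N.+1 - m)%N)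
           (insert_block xs i.-1 (N.+1 - m)%N
              (eta_Ri eta (N.+1 - m)%N i r (take (N.+1 - m)%N (drop i.-1 al))
                                        (take (N.+1 - m)%N (drop i.-1 xs))))).
  apply: eq_big_nat => m /andP[m1 mN]; apply: eq_big_nat => i /andP[i1 im].
  have hN : (m + (N.+1 - m) - 1 = N)%N by lia.
  rewrite -scaler_sumr; congr (_ *: _); rewrite -sum_dend_summand ?hN //; try lia.
    by rewrite size_contract //; lia.
  by apply: ml; lia.
under eq_big_nat => m _ do rewrite exchange_big_nat.
rewrite exchange_big_nat big_nat_cond big1 // => r /andP[/andP[r1 rN] _].
by apply: di; rewrite ?r1.
Qed.

End MuOfEta.

Theorem proposition5p10 (K : comNzRingType) (A : lmodType K) (G : int -> pred A)
    (Om : Type) (op : Om -> Om -> Om)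
    (eta : nat -> nat -> seq Om -> seq A -> A) :
  char0 K -> graded G -> associative op ->
  is_Dend_family_algebra G op eta ->
  is_Ainf_algebra G op (mu_of_eta eta).
Proof.
move=> _ gG _ [ml dg _ di]; split.
- by move=> k _; apply: multilinear_mu_of_eta => r; apply: ml.
- by move=> k _; apply: has_degree_mu_of_eta => // r; apply: dg.
- exact: ainf_identity_mu_of_eta.
Qed.
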